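(* Let $\Pi=(\mathsf A,\mathsf B)$ be a protocol. Then for every $c\in(0,\frac12]$ there exists $z=z(c,\Pi)\in\mathbb N$ such that either (1) $\mathbb E_{L_\Pi}[C^{\mathsf A,z}_\Pi]\ge c(1-2c)$ and $\sum_{j=0}^{z-1}\beta_j<c$; or (2) $\mathbb E_{L_\Pi}[C^{\mathsf B,z}_\Pi]\ge c(1-2c)$ and $\sum_{j=0}^{z}\alpha_j<c$, where $\alpha_j=1-\mathrm{Best}_{\mathsf B}(\Pi_{(\mathsf A,j)})$ and $\beta_j=1-\mathrm{Best}_{\mathsf A}(\Pi_{(\mathsf B,j)})$.
   Context: Protocols are $m$-round single-bit-message protocols identified with the complete binary tree of height $m$, with control scheme, edge probabilities $e_\Pi(u,ub)$, output $\chi_\Pi:\text{leaves}\to\{0,1\}$, visit probabilities $v_\Pi(u)$, leaf distribution $L_\Pi$; $\Pi_u$ is the subprotocol under $u$ (or $\perp$ if $v_\Pi(u)=0$); expectations over $L_\perp$ are $0$; $\mathbb E_{L_{\Pi_u}}[M]$ is the expectation of $M$ restricted to leaves under $u$. $\mathsf A$-dominated measure $M^{\mathsf A}_\Pi$: for a 0-round protocol with leaf $\ell$, $M^{\mathsf A}_\Pi(\ell)=\chi_\Pi(\ell)$; otherwise for a leaf with first bit $b$, with $\mu_c=\mathbb E_{L_{\Pi_c}}[M^{\mathsf A}_{\Pi_c}]$: value $0$ if $e_\Pi(\lambda,b)=0$; $M^{\mathsf A}_{\Pi_b}(\ell)$ if $e_\Pi(\lambda,b)=1$, or if $e_\Pi(\lambda,b)\in(0,1)$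 and ($\mathsf A$ controls the root or $\mu_b\le\mu_{1-b}$); $\frac{\mu_{1-b}}{\mu_b}M^{\mathsf A}_{\Pi_b}(\ell)$ otherwise. $M^{\mathsf B}_\Pi$ is defined identically with $\mathsf A,\mathsf B$ exchanged and base case $1-\chi_\Pi(\ell)$; $M^{\mathsf A}_\perp,M^{\mathsf B}_\perp$ are zero. Conditional protocol: for $\mathbb E_{L_\Pi}[M]<1$, $\Pi|_M$ keeps control and output and has $e_{\Pi|_M}(u,ub)=0$ if $\mathbb E_{L_{\Pi_u}}[M]=1$, else $e_\Pi(u,ub)\frac{1-\mathbb E_{L_{\Pi_{ub}}}[M]}{1-\mathbb E_{L_{\Pi_u}}[M]}$; $\Pi|_M=\perp$ if $\mathbb E_{L_\Pi}[M]=1$ or $\Pi=\perp$. Sequence: $\Pi_{(\mathsf A,0)}=\Pi$, $\Pi_{(\mathsf B,j)}=\Pi_{(\mathsf A,j)}|_{M^{\mathsf A}_{\Pi_{(\mathsf A,j)}}}$, $\Pi_{(\mathsf A,j+1)}=\Pi_{(\mathsf B,j)}|_{M^{\mathsf B}_{\Pi_{(\mathsf B,j)}}}$. $C^{\mathsf A,z}_\Pi=\sum_{j=0}^z M^{\mathsf A}_{\Pi_{(\mathsf A,j)}}\prod_{t<j}(1-M^{\mathsf A}_{\Pi_{(\mathsf A,t)}})$ and $C^{\mathsf B,z}_\Pi=\sum_{j=0}^z M^{\mathsf B}_{\Pi_{(\mathsf B,j)}}\prod_{t<j}(1-M^{\mathsf B}_{\Pi_{(\mathsf B,t)}})$. $\mathrm{Best}_{\mathsf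 A}(\Pi')$ ($\mathrm{Best}_{\mathsf B}(\Pi')$) is the maximal probability of output $1$ (resp. $0$) achievable by a deterministic attacker for $\mathsf A$ (resp. $\mathsf B$) that only sends messages with positive probability in $\Pi'$, against the honest other party; $\mathrm{Best}_{\mathsf A}(\perp)=\mathrm{Best}_{\mathsf B}(\perp)=1$. *)

From HB Require Import structures.
From mathcomp Require Import all_boot all_order all_algebra.
From mathcomp Require Import boolp classical_sets reals.
Set Implicit Arguments. Unset Strict Implicit. Unset Printing Implicit Defensive.
Import Order.TTheory GRing.Theory Num.Theory.
Local Open Scope ring_scope.

(* Nodes of the complete binary tree are bit sequences (root = [::]);
   the children of u are u ++ [:: b]; leaves of an m-round protocol are the
   sequences of size m.  Party A is encoded by [true], party B by [false]. *)
Record proto (R : Type) := Proto {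
  pm : nat;                         (* number of rounds m *)
  pctrl : seq bool -> bool;         (* pctrl u = true iff A controls node u *)
  pe : seq bool -> bool -> R;       (* pe u b = e_Pi(u, ub) *)
  pchi : seq bool -> bool           (* output chi_Pi on leaves *)
}.

Section Protocols.
Variable R : realType.
Implicit Types (P : proto R) (M : seq bool -> R).

Definition is_protocol P : Prop :=
  forall u : seq bool, (size u < pm P)%N ->
    0 <= pe P u false /\ 0 <= pe P u true /\ pe P u false + pe P u true = 1.

Definition rsub P (u : seq bool) : proto R :=
  Proto (pm P - size u) (fun w => pctrl P (u ++ w)) (fun w => pe P (u ++ w))
        (fun w => pchi P (u ++ w)).

Fixpoint visit_rec (f : seq bool -> bool -> R) (pre u : seq bool) : R :=
  match u with
  | [::] => 1
  | b :: w => f pre b * visit_rec f (rcons pre b) w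
  end.
Definition visit P (u : seq bool) : R := visit_rec (pe P) [::] u.

(* subprotocol Pi_u, or bot (None) if v_Pi(u) = 0 *)
Definition sub P (u : seq bool) : option (proto R) :=
  if visit P u == 0 then None else Some (rsub P u).

Definition Exp P M : R := \sum_(l : (pm P).-tuple bool) visit P l * M l.
Definition ExpO (oP : option (proto R)) M : R :=
  if oP is Some P then Exp P M else 0.
Definition ExpU P M (u : seq bool) : R := ExpO (sub P u) (fun w => M (u ++ w)).

(* dominated measures; p = true gives M^A, p = false gives M^B *)
Definition dom_base (p : bool) (x : bool) : R :=
  if p then (x%:R : R) else 1 - (x%:R : R).

Fixpoint dom_rec (p : bool) (n : nat) P : seq bool -> R :=
  match n with
  | 0 => fun l => dom_base p (pchi P l)
  | n'.+1 => fun l =>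
      let Mc (c : bool) := dom_rec p n' (rsub P [:: c]) in
      let mu (c : bool) :=
        if sub P [:: c] is Some Pc then Exp Pc (Mc c) else 0 in
      match l with
      | [::] => 0
      | b :: l' =>
          let e := pe P [::] b in
          if e == 0 then 0
          else if e == 1 then Mc b l'
          else if (0 < e < 1) && ((pctrl P [::] == p) || (mu b <= mu (~~ b)))
          then Mc b l'
          else mu (~~ b) / mu b * Mc b l'
      end
  end.
Definition dom (p : bool) P : seq bool -> R := dom_rec p (pm P) P.
Definition domO (p : bool) (oP : option (proto R)) : seq bool -> R :=
  if oP is Some P then dom p P else fun _ => 0.

Definition cond_proto P M : proto R :=
  Proto (pm P) (pctrl P)
    (fun u b => if ExpU P M u == 1 then 0
                else pe P u b * (1 - ExpU P M (rcons u b)) / (1 - ExpU P M u))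
    (pchi P).
Definition cond (oP : option (proto R)) M : option (proto R) :=
  if oP is Some P then (if Exp P M < 1 then Some (cond_proto P M) else None)
  else None.

Definition stepB (oA : option (proto R)) := cond oA (domO true oA).
Definition stepA (oB : option (proto R)) := cond oB (domO false oB).
Definition PiA P (j : nat) : option (proto R) :=
  iter j (fun o => stepA (stepB o)) (Some P).
Definition PiB P (j : nat) : option (proto R) := stepB (PiA P j).

Definition CA P (z : nat) : seq bool -> R := fun l =>
  \sum_(j < z.+1) domO true (PiA P j) l *
                  \prod_(t < j) (1 - domO true (PiA P t) l).
Definition CB P (z : nat) : seq bool -> R := fun l =>
  \sum_(j < z.+1) domO false (PiB P j) l *
                  \prod_(t < j) (1 - domO false (PiB P t) l).

(* deterministic attackers: a strategy gives the attacker's message at every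
   node (history); [attack_val p] = probability of output 1 (p = A) resp.
   output 0 (p = B) against the honest other party; [attack_ok] = the
   attacker only sends messages of positive probability (on every node
   reached with positive probability during the attack). *)
Fixpoint attack_val (p : bool) (n : nat) P (f : seq bool -> bool) : R :=
  match n with
  | 0 => (((pchi P [::]) == p)%:R : R)
  | n'.+1 =>
      if pctrl P [::] == p then
        attack_val p n' (rsub P [:: f [::]]) (fun w => f (f [::] :: w))
      else \sum_(b : bool) pe P [::] b *
             attack_val p n' (rsub P [:: b]) (fun w => f (b :: w))
  end.
Fixpoint attack_ok (p : bool) (n : nat) P (f : seq bool -> bool) : Prop :=
  match n with
  | 0 => True
  | n'.+1 =>
      if pctrl P [::] == p then
        0 < pe P [::] (f [::]) /\
        attack_ok p n' (rsub P [:: f [::]]) (fun w => f (f [::] :: w))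
      else forall b : bool, 0 < pe P [::] b ->
             attack_ok p n' (rsub P [:: b]) (fun w => f (b :: w))
  end.

(* Best_A (p = true), Best_B (p = false); Best(bot) = 1 *)
Definition Best (p : bool) (oP : option (proto R)) : R :=
  if oP is Some P then
    sup [set x : R | exists f, attack_ok p (pm P) P f /\
                               x = attack_val p (pm P) P f]
  else 1.

Definition alpha P (j : nat) : R := 1 - Best false (PiA P j).
Definition beta P (j : nat) : R := 1 - Best true (PiB P j).

End Protocols.

(* Let mu_A(j) and mu_B(j) be the expectations of the dominated measures of
   Pi_(A,j) and Pi_(B,j).  The expectation of M^A is the value of the game in
   which B, attacking with messages of positive probability, minimises the
   probability of output 1; a B-attack reaching it shows alpha_j <= mu_A(j),
   and symmetrically beta_j <= mu_B(j).
   Conditioning on M multiplies the weight of a leaf l by (1 - M l)/(1 - E M),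
   so after j rounds v_Pi(l) prod_(i<j) (1 - M^A_i l)(1 - M^B_i l) equals
   N_j v_(Pi_(A,j))(l) with N_j = prod_(i<j) (1 - mu_A(i))(1 - mu_B(i)).  Hence
   E[C^(A,z)] >= sum_(j<=z) N_j mu_A(j) and
   E[C^(B,z)] >= sum_(j<=z) N_j (1 - mu_A(j)) mu_B(j), while the union bound
   gives N_j >= 1 - sum_(i<j) (mu_A(i) + mu_B(i)).
   Every round removes a leaf from the support (M^A and M^B cannot both have
   expectation 0, and a positive one equals 1 on some reachable leaf), so some
   mu_A(K) or mu_B(K) reaches 1.  Taking z to be the first index at which a
   partial sum of mu_A or of mu_B reaches c yields one of the two cases. *)

From HB Require Import structures.
From mathcomp Require Import all_boot all_order all_algebra.
From mathcomp Require Import boolp classical_sets reals.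
From mathcomp Require Import ring lra zify.
From Stdlib Require Import Lia.
Set Implicit Arguments. Unset Strict Implicit. Unset Printing Implicit Defensive.
Import Order.TTheory GRing.Theory Num.Theory.
Local Open Scope ring_scope.

Section RealFacts.
Variable R : realFieldType.
Implicit Types (f : nat -> R).

Lemma union_bound_mul (x y s t : R) : 0 <= x <= 1 -> y <= 1 -> 1 - s <= x -> 1 - t <= y ->
  1 - (s + t) <= x * y.
Proof. by move=> /andP[x0 x1] y1 hx hy; nra. Qed.

Lemma mul1B_bounds (x y : R) : 0 <= x <= 1 -> 0 <= y <= 1 ->
  [/\ 0 <= (1 - x) * (1 - y), (1 - x) * (1 - y) <= 1 - x & (1 - x) * (1 - y) <= 1 - y].
Proof. by move=> /andP[x0 x1] /andP[y0 y1]; split; nra. Qed.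

Lemma sum_boolE (F : bool -> R) c : \sum_(b : bool) F b = F c + F (~~ c).
Proof. by rewrite big_bool; case: c; rewrite // addrC. Qed.

Lemma sum_bool_gt0 (F : bool -> R) : 0 < \sum_(b : bool) F b -> exists b, 0 < F b.
Proof.
rewrite big_bool /= => h; case: (ltP 0 (F true)) => [|h1]; first by exists true.
by exists false; lra.
Qed.

Lemma ler_sum_ord_widen f j k : (forall i, 0 <= f i) -> (j <= k)%N ->
  \sum_(i < j) f i <= \sum_(i < k) f i.
Proof.
move=> hf hjk; rewrite -!(big_mkord xpredT) [X in _ <= X](big_cat_nat (n := j)) //=.
by rewrite lerDl sumr_ge0.
Qed.

Lemma ler_sum_term f t k : (forall i, 0 <= f i) -> (t < k)%N -> f t <= \sum_(i < k) f i.
Proof.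
move=> hf htk; apply: le_trans (ler_sum_ord_widen hf htk).
by rewrite big_ord_recr /= lerDr sumr_ge0.
Qed.

Lemma exists_first_crossing (a b : nat -> R) c :
    (forall i, 0 <= a i) -> (forall i, 0 <= b i) -> 0 < c ->
    (exists K, c <= a K \/ c <= b K) ->
  exists z, [/\ \sum_(i < z) a i < c, \sum_(i < z) b i < c &
    c <= \sum_(i < z.+1) a i \/ \sum_(i < z.+1) a i < c <= \sum_(i < z.+1) b i].
Proof.
move=> ha hb c0 [K hK].
pose X z := (c <= \sum_(i < z.+1) a i) || (c <= \sum_(i < z.+1) b i).
have exX : exists z, X z.
  exists K; apply/orP; case: hK => h; [left|right]; apply: le_trans h _;
    exact: ler_sum_term.
have [z Xz zmin] := ex_minnP exX; exists z.
have below t : (t < z)%N -> \sum_(i < t.+1) a i < c /\ \sum_(i < t.+1) b i < c.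
  move=> ht; have : ~~ X t by apply/negP => /zmin; rewrite leqNgt ht.
  by rewrite negb_or -!ltNge => /andP[].
have [-> ->] : \sum_(i < z) a i < c /\ \sum_(i < z) b i < c.
  by case: z {Xz zmin} below => [_|z below]; [rewrite !big_ord0 | exact: below].
split=> //; case: (leP c (\sum_(i < z.+1) a i)) => h; [left|right] => //.
by move: Xz; rewrite /X leNgt h.
Qed.

End RealFacts.

Section Protocols.
Variable R : realType.
Implicit Types (Q : proto R) (M : seq bool -> R).

Lemma visit_rec_cat (f : seq bool -> bool -> R) pre u w :
  visit_rec f pre (u ++ w) = visit_rec f pre u * visit_rec f (pre ++ u) w.
Proof.
elim: u pre => [|b u IH] pre /=; first by rewrite mul1r cats0.
by rewrite IH mulrA cat_rcons.
Qed.

Lemma visit_rec_shift (f : seq bool -> bool -> R) pre q t :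
  visit_rec f (pre ++ q) t = visit_rec (fun w => f (pre ++ w)) q t.
Proof. by elim: t q => [|b t IH] q //=; rewrite -IH rcons_cat. Qed.

Lemma visit_nil Q : visit Q [::] = 1.
Proof. by []. Qed.

Lemma visit_cat Q u w : visit Q (u ++ w) = visit Q u * visit (rsub Q u) w.
Proof. by rewrite /visit visit_rec_cat -(visit_rec_shift _ u [::]) cats0. Qed.

Lemma visit_cons Q b w : visit Q (b :: w) = pe Q [::] b * visit (rsub Q [:: b]) w.
Proof. by rewrite -cat1s visit_cat /visit /= mulr1. Qed.

Lemma visit_rcons Q u b : visit Q (rcons u b) = visit Q u * pe Q u b.
Proof. by rewrite -cats1 visit_cat /visit /= mulr1 cats0. Qed.

Fixpoint Exp_rec n Q M : R :=
  if n is n'.+1 then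
    \sum_(b : bool) pe Q [::] b * Exp_rec n' (rsub Q [:: b]) (fun w => M (b :: w))
  else M [::].

Lemma big_tuple_cons n (F : seq bool -> R) :
  \sum_(t : n.+1.-tuple bool) F t = \sum_(b : bool) \sum_(t : n.-tuple bool) F (b :: t).
Proof.
rewrite pair_big /= (reindex (fun p : bool * n.-tuple bool => [tuple of p.1 :: p.2])).
  by apply: eq_bigr => -[b t].
exists (fun t : n.+1.-tuple bool => (thead t, behead_tuple t)).
  by move=> [b t] _; congr (_, _); apply: val_inj.
by move=> t _; apply: val_inj; case: t => -[].
Qed.

Lemma sum_visit_Exp_rec n Q M :
  \sum_(t : n.-tuple bool) visit Q t * M t = Exp_rec n Q M.
Proof.
elim: n Q M => [|n IH] Q M /=.
  by rewrite (big_pred1 [tuple]) ?mul1r // => t; rewrite !inE tuple0 eqxx.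
rewrite (@big_tuple_cons n (fun t => visit Q t * M t)); apply: eq_bigr => b _.
rewrite -IH big_distrr /=; apply: eq_bigr => t _.
by rewrite visit_cons mulrA.
Qed.

Lemma ExpE Q M : Exp Q M = Exp_rec (pm Q) Q M.
Proof. exact: sum_visit_Exp_rec. Qed.

Lemma Exp_pm n Q M : pm Q = n -> Exp Q M = \sum_(t : n.-tuple bool) visit Q t * M t.
Proof. by move=> h; rewrite ExpE h sum_visit_Exp_rec. Qed.

Lemma Exp_sum Q k (F : nat -> seq bool -> R) :
  Exp Q (fun l => \sum_(j < k) F j l) = \sum_(j < k) Exp Q (F j).
Proof. by rewrite exchange_big; apply: eq_bigr => l _; rewrite big_distrr. Qed.

Lemma Exp_rec_ext n Q1 Q2 M1 M2 : pe Q1 =2 pe Q2 -> M1 =1 M2 ->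
  Exp_rec n Q1 M1 = Exp_rec n Q2 M2.
Proof.
elim: n Q1 Q2 M1 M2 => [|n IH] Q1 Q2 M1 M2 He HM /=; first exact: HM.
apply: eq_bigr => b _; rewrite He; congr (_ * _).
by apply: IH => [w c|w]; rewrite /= ?He ?HM.
Qed.

Lemma Exp_recZ n Q M k : Exp_rec n Q (fun w => k * M w) = k * Exp_rec n Q M.
Proof.
elim: n Q M => [|n IH] Q M //=; rewrite big_distrr; apply: eq_bigr => b _.
by rewrite (IH _ (fun w => M (b :: w))) mulrCA.
Qed.

(* Conditional protocols are only protocols in this weak sense: below a node
   [u] with [ExpU Q M u = 1] both edges get probability 0. *)
Definition wprotocol n Q := forall u, (size u < n)%N -> visit Q u != 0 ->
  [/\ 0 <= pe Q u false, 0 <= pe Q u true & pe Q u false + pe Q u true = 1].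

Lemma is_protocol_wprotocol P : is_protocol P -> wprotocol (pm P) P.
Proof. by move=> hP u hu _; have [? []] := hP u hu. Qed.

Section Root.
Variables (n : nat) (Q : proto R).
Hypothesis hQ : wprotocol n.+1 Q.

Lemma wprotocol_root :
  [/\ 0 <= pe Q [::] false, 0 <= pe Q [::] true & pe Q [::] false + pe Q [::] true = 1].
Proof. by apply: hQ; rewrite ?visit_nil ?oner_eq0. Qed.

Lemma pe_root_ge0 b : 0 <= pe Q [::] b.
Proof. by case: wprotocol_root; case: b. Qed.

Lemma pe_rootN b : pe Q [::] (~~ b) = 1 - pe Q [::] b.
Proof. by case: wprotocol_root => _ _ <-; case: b => /=; ring. Qed.

Lemma pe_root_le1 b : pe Q [::] b <= 1.
Proof. by rewrite -subr_ge0 -pe_rootN pe_root_ge0. Qed.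

Lemma sum_pe_root : \sum_(b : bool) pe Q [::] b = 1.
Proof. by case: wprotocol_root => _ _ <-; rewrite big_bool addrC. Qed.

Lemma wprotocol_child b : pe Q [::] b != 0 -> wprotocol n (rsub Q [:: b]).
Proof.
move=> hb u hu hv; have := @hQ (b :: u) hu.
by rewrite visit_cons mulf_neq0 //; apply.
Qed.

End Root.

Lemma pe_root_mean_bounds n Q (F : bool -> R) lo hi : wprotocol n.+1 Q ->
    (forall b, pe Q [::] b != 0 -> lo <= F b <= hi) ->
  lo <= \sum_(b : bool) pe Q [::] b * F b <= hi.
Proof.
move=> hQ hF; have [_ _ hs] := wprotocol_root hQ.
have le b : pe Q [::] b * lo <= pe Q [::] b * F b <= pe Q [::] b * hi.
  have [->|hb] := eqVneq (pe Q [::] b) 0; first by rewrite !mul0r lexx.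
  by have /andP[? ?] := hF b hb; rewrite !ler_wpM2l ?(pe_root_ge0 hQ).
have /andP[l0 h0] := le false; have /andP[l1 h1] := le true.
rewrite big_bool /= -[lo]mul1r -[hi]mul1r -hs !mulrDl.
by apply/andP; split; rewrite addrC lerD.
Qed.

Lemma Exp_rec_bounds n Q M lo hi : wprotocol n Q -> (forall w, lo <= M w <= hi) ->
  lo <= Exp_rec n Q M <= hi.
Proof.
elim: n Q M => [|n IH] Q M hQ hM /=; first exact: hM.
apply: (pe_root_mean_bounds hQ) => b hb.
by apply: IH => //; apply: wprotocol_child.
Qed.

Lemma wprotocol_rsub n Q u : wprotocol n Q -> visit Q u != 0 ->
  wprotocol (n - size u) (rsub Q u).
Proof.
move=> hQ hu w hw hv; have := @hQ (u ++ w); rewrite size_cat -ltn_subRL visit_cat.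
by rewrite mulf_neq0 //; apply.
Qed.

Lemma visit_ge0 n Q u : wprotocol n Q -> (size u <= n)%N -> 0 <= visit Q u.
Proof.
move=> hQ; elim/last_ind: u => [|u b IH]; first by rewrite visit_nil ler01.
rewrite size_rcons visit_rcons => hs; have [->|hv] := eqVneq (visit Q u) 0.
  by rewrite mul0r.
by have [? ? _] := hQ u hs hv; rewrite mulr_ge0 ?IH 1?ltnW //; case: b.
Qed.

Lemma ler_Exp n Q M1 M2 : wprotocol n Q -> pm Q = n -> (forall l, M1 l <= M2 l) ->
  Exp Q M1 <= Exp Q M2.
Proof.
move=> hQ hpm hM; rewrite !(Exp_pm _ hpm); apply: ler_sum => t _.
by rewrite ler_wpM2l ?(visit_ge0 hQ) ?size_tuple.
Qed.

End Protocols.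

Section Value.
Variable R : realType.
Implicit Types (Q : proto R) (V : bool -> R).

(* [child_mean p n Q c] is the paper's mu_c, and [dom_coef p n Q b] is the
   factor in front of M_(Pi_b)(l) in the definition of M_Pi(b :: l). *)
Definition child_mean p n Q (c : bool) : R :=
  if sub Q [:: c] is Some Qc then Exp Qc (dom_rec p n (rsub Q [:: c])) else 0.

Definition dom_coef p n Q (b : bool) : R :=
  let e := pe Q [::] b in
  if e == 0 then 0 else if e == 1 then 1
  else if (0 < e < 1) &&
          ((pctrl Q [::] == p) || (child_mean p n Q b <= child_mean p n Q (~~ b)))
  then 1 else child_mean p n Q (~~ b) / child_mean p n Q b.

Lemma dom_base_01 p x : 0 <= dom_base R p x <= 1.
Proof. by case: p; case: x; rewrite /= ?subrr ?subr0 ?lexx ?ler01. Qed.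

Lemma dom_rec_nil p n Q : dom_rec p n.+1 Q [::] = 0.
Proof. by []. Qed.

Lemma dom_rec_cons p n Q b l :
  dom_rec p n.+1 Q (b :: l) = dom_coef p n Q b * dom_rec p n (rsub Q [:: b]) l.
Proof. by rewrite /= /dom_coef /child_mean; do !case: ifP => _; rewrite ?mul0r ?mul1r. Qed.

Lemma pm_rsub1 Q n c : pm Q = n.+1 -> pm (rsub Q [:: c]) = n.
Proof. by move=> h; rewrite /= h subSS subn0. Qed.

Lemma child_meanE p n Q c : pm Q = n.+1 ->
  child_mean p n Q c = if pe Q [::] c == 0 then 0
                       else Exp_rec n (rsub Q [:: c]) (dom_rec p n (rsub Q [:: c])).
Proof.
move=> hpm; rewrite /child_mean /sub.
have -> : visit Q [:: c] = pe Q [::] c by rewrite /visit /= mulr1.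
by case: eqP => // _; rewrite ExpE (pm_rsub1 c hpm).
Qed.

Lemma dom_coef_01 p n Q b : wprotocol n.+1 Q -> (forall c, 0 <= child_mean p n Q c) ->
  0 <= dom_coef p n Q b <= 1.
Proof.
move=> hQ hmu; rewrite /dom_coef; case: eqP => [|/eqP e0]; first by rewrite lexx ler01.
case: eqP => [|/eqP e1]; first by rewrite lexx ler01.
have -> : 0 < pe Q [::] b < 1.
  by rewrite !lt_def e0 eq_sym e1 (pe_root_ge0 hQ) (pe_root_le1 hQ).
case: ifP => [|/norP[_]]; first by rewrite lexx ler01.
rewrite -ltNge => lt; have mu_gt0 := le_lt_trans (hmu _) lt.
by rewrite divr_ge0 ?hmu //= ler_pdivrMr // mul1r ltW.
Qed.

Definition min_child V Q : bool :=
  if pe Q [::] false == 0 then true else if pe Q [::] true == 0 then false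
  else V true < V false.

Lemma min_child_pe n V Q : wprotocol n.+1 Q -> 0 < pe Q [::] (min_child V Q).
Proof.
move=> hQ; rewrite lt_def (pe_root_ge0 hQ) andbT /min_child.
have [e0|e0] := eqVneq (pe Q [::] false) 0.
  by rewrite -[true]/(~~ false) (pe_rootN hQ) e0 subr0 oner_eq0.
have [e1|e1] := eqVneq (pe Q [::] true) 0; last by case: (_ < _).
by rewrite -[false]/(~~ true) (pe_rootN hQ) e1 subr0 oner_eq0.
Qed.

Lemma min_child_le V Q b : pe Q [::] b != 0 -> V (min_child V Q) <= V b.
Proof.
rewrite /min_child; case: b => hb.
  by case: eqP => _; [|rewrite (negPf hb)]; [|case: ltP; rewrite ?lexx // => /ltW].
rewrite (negPf hb); case: eqP => _ //; case: ltP => //; exact: ltW.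
Qed.

(* The smallest probability of an outcome favourable to [p] that the other
   party can achieve against honest [p] with an attack sending only messages of
   positive probability. *)
Fixpoint value p n Q : R :=
  if n is n'.+1 then
    let V c := value p n' (rsub Q [:: c]) in
    if pctrl Q [::] == p then \sum_(b : bool) pe Q [::] b * V b
    else V (min_child V Q)
  else dom_base R p (pchi Q [::]).

Lemma valueS p n Q (V := fun c => value p n (rsub Q [:: c])) :
  value p n.+1 Q =
  if pctrl Q [::] == p then \sum_(b : bool) pe Q [::] b * V b else V (min_child V Q).
Proof. by []. Qed.

Lemma value_01 p n Q : wprotocol n Q -> 0 <= value p n Q <= 1.
Proof.
elim: n Q => [|n IH] Q hQ /=; first exact: dom_base_01.
case: ifP => _; last by apply/IH/wprotocol_child/lt0r_neq0/(min_child_pe _ hQ).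
by apply: (pe_root_mean_bounds hQ) => b hb; apply: IH; apply: wprotocol_child.
Qed.

(* At a node of the other party, the rescaling makes both subtrees contribute
   the smaller of the two child means. *)
Lemma dom_coef_mul p n Q V b : wprotocol n.+1 Q ->
    (forall c, pe Q [::] c != 0 -> child_mean p n Q c = V c /\ 0 <= V c) ->
    pe Q [::] b != 0 ->
  dom_coef p n Q b * V b = if pctrl Q [::] == p then V b else V (min_child V Q).
Proof.
move=> hQ hmu hb; have [e1|e1] := eqVneq (pe Q [::] b) 1.
  have e0 : pe Q [::] (~~ b) = 0 by rewrite (pe_rootN hQ) e1 subrr.
  rewrite /dom_coef e1 oner_eq0 eqxx mul1r; case: ifP => // _.
  by rewrite /min_child; case: b hb e0 e1 => /= _ -> ->; rewrite ?eqxx ?oner_eq0.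
have hnb : pe Q [::] (~~ b) != 0.
  by rewrite (pe_rootN hQ) subr_eq0 eq_sym.
have [mub Vb] := hmu b hb; have [munb Vnb] := hmu _ hnb.
rewrite /dom_coef (negPf hb) (negPf e1) mub munb.
have -> : 0 < pe Q [::] b < 1.
  by rewrite !lt_def hb eq_sym e1 (pe_root_ge0 hQ) (pe_root_le1 hQ).
case: (pctrl Q [::] == p) => /=; first by rewrite mul1r.
have le_b := min_child_le V hb; have le_nb := min_child_le V hnb.
have : min_child V Q = b \/ min_child V Q = ~~ b by case: min_child; case: (b); auto.
case: leP => h; last rewrite divfK ?gt_eqF ?(le_lt_trans Vnb h) //.
  by rewrite mul1r; case=> E; rewrite E in le_b le_nb *; apply/le_anti/andP; split.
by case=> E; rewrite E in le_b le_nb *; apply/le_anti/andP; split => //; apply: ltW.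
Qed.

Lemma Exp_rec_dom p n Q : wprotocol n Q -> pm Q = n ->
  Exp_rec n Q (dom_rec p n Q) = value p n Q.
Proof.
elim: n Q => [|n IH] Q hQ hpm //.
set V := fun c => value p n (rsub Q [:: c]).
have hmu c : pe Q [::] c != 0 -> child_mean p n Q c = V c /\ 0 <= V c.
  move=> hc; have hQc := wprotocol_child hQ hc; have /andP[V0 _] := value_01 p hQc.
  by rewrite child_meanE // (negPf hc) IH //; exact: pm_rsub1.
transitivity (\sum_(b : bool) pe Q [::] b *
                (if pctrl Q [::] == p then V b else V (min_child V Q))).
  apply: eq_bigr => b _; have [->|hb] := eqVneq (pe Q [::] b) 0; first by rewrite !mul0r.
  rewrite -(dom_coef_mul hQ hmu hb) -(hmu b hb).1 child_meanE // (negPf hb) -Exp_recZ.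
  by congr (_ * _); apply: Exp_rec_ext => // w; rewrite dom_rec_cons.
rewrite [RHS]/= -/V; case: ifP => // _.
by rewrite -big_distrl /= (sum_pe_root hQ) mul1r.
Qed.

Lemma child_mean_value p n Q c : wprotocol n.+1 Q -> pm Q = n.+1 -> pe Q [::] c != 0 ->
  child_mean p n Q c = value p n (rsub Q [:: c]) /\ 0 <= value p n (rsub Q [:: c]).
Proof.
move=> hQ hpm hc; have hQc := wprotocol_child hQ hc; have hpmc := pm_rsub1 c hpm.
by have /andP[? _] := value_01 p hQc; rewrite child_meanE // (negPf hc) Exp_rec_dom.
Qed.

Lemma dom_rec_01 p n Q l : wprotocol n Q -> pm Q = n -> 0 <= dom_rec p n Q l <= 1.
Proof.
elim: n Q l => [|n IH] Q [|b l] hQ hpm; try exact: dom_base_01.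
  by rewrite dom_rec_nil lexx ler01.
rewrite dom_rec_cons; have [e0|e0] := eqVneq (pe Q [::] b) 0.
  by rewrite /dom_coef e0 eqxx mul0r lexx ler01.
have hmu c : 0 <= child_mean p n Q c.
  have [ec|ec] := eqVneq (pe Q [::] c) 0; first by rewrite child_meanE // ec eqxx.
  by have [-> ->] := child_mean_value p hQ hpm ec.
have /andP[k0 k1] := dom_coef_01 b hQ hmu.
have /andP[d0 d1] := IH _ l (wprotocol_child hQ e0) (pm_rsub1 b hpm).
by rewrite mulr_ge0 ?mulr_ile1.
Qed.

Lemma Exp_dom p n Q : wprotocol n Q -> pm Q = n -> Exp Q (dom p Q) = value p n Q.
Proof. by move=> hQ hpm; rewrite ExpE /dom hpm Exp_rec_dom. Qed.

Lemma dom_01 p n Q l : wprotocol n Q -> pm Q = n -> 0 <= dom p Q l <= 1.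
Proof. by move=> hQ hpm; rewrite /dom hpm; apply: dom_rec_01. Qed.

Lemma value_pos_leaf p n Q : wprotocol n Q -> pm Q = n -> 0 < value p n Q ->
  exists2 l, size l = n & visit Q l != 0 /\ dom_rec p n Q l = 1.
Proof.
elim: n Q => [|n IH] Q hQ hpm.
  move=> h; exists [::] => //; split; first by rewrite visit_nil oner_eq0.
  by move: h => /=; case: p; case: (pchi Q [::]); rewrite /= ?subrr ?subr0 ?ltxx.
set V := fun c => value p n (rsub Q [:: c]).
have hmu c : pe Q [::] c != 0 -> child_mean p n Q c = V c /\ 0 <= V c.
  exact: child_mean_value.
have leaf c : pe Q [::] c != 0 -> 0 < V c ->
    dom_coef p n Q c * V c = V c ->
    exists2 l, size l = n.+1 & visit Q l != 0 /\ dom_rec p n.+1 Q l = 1.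
  move=> hc Vc hk; have [l hl [hv hd]] := IH _ (wprotocol_child hQ hc) (pm_rsub1 c hpm) Vc.
  exists (c :: l); first by rewrite /= hl.
  rewrite visit_cons mulf_neq0 // dom_rec_cons hd mulr1; split => //.
  by apply: (mulIf (lt0r_neq0 Vc)); rewrite mul1r.
rewrite valueS; case: ifP => hp h; last first.
  have hc := lt0r_neq0 (min_child_pe V hQ).
  by apply: (leaf _ hc h); rewrite (dom_coef_mul hQ hmu hc) hp.
have [b hb] := sum_bool_gt0 h.
have pb : pe Q [::] b != 0 by apply: contraTneq hb => ->; rewrite mul0r ltxx.
have pb0 : 0 < pe Q [::] b by rewrite lt_def pb (pe_root_ge0 hQ).
by apply: (leaf _ pb); [rewrite -(pmulr_rgt0 _ pb0) | rewrite (dom_coef_mul hQ hmu pb) hp].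
Qed.

Lemma value_eq0_valueN p n Q : wprotocol n Q -> value p n Q = 0 -> 0 < value (~~ p) n Q.
Proof.
elim: n Q => [|n IH] Q hQ.
  by rewrite /=; case: p; case: (pchi Q [::]) => /=; lra.
have hV q b : pe Q [::] b != 0 -> 0 <= value q n (rsub Q [:: b]).
  by move=> hb; have /andP[] := value_01 q (wprotocol_child hQ hb).
have term_ge0 q b : 0 <= pe Q [::] b * value q n (rsub Q [:: b]).
  have [->|hb] := eqVneq (pe Q [::] b) 0; first by rewrite mul0r.
  by rewrite mulr_ge0 ?(pe_root_ge0 hQ) ?hV.
have hctrl : (pctrl Q [::] == ~~ p) = ~~ (pctrl Q [::] == p) by case: pctrl; case: (p).
rewrite !valueS hctrl; case: (pctrl Q [::] == p) => /= h0.
  have {}h0 := psumr_eq0P (fun b _ => term_ge0 p b) h0.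
  set c := min_child _ Q; have pc : 0 < pe Q [::] c := min_child_pe _ hQ.
  apply: (IH _ (wprotocol_child hQ (lt0r_neq0 pc))).
  by move/eqP: (h0 c isT); rewrite mulf_eq0 (gt_eqF pc) => /eqP.
set c := min_child _ Q in h0; have pc : 0 < pe Q [::] c := min_child_pe _ hQ.
have := mulr_gt0 pc (IH _ (wprotocol_child hQ (lt0r_neq0 pc)) h0).
by rewrite (sum_boolE _ c); have := term_ge0 (~~ p) (~~ c); lra.
Qed.

Lemma value_ext p n Q1 Q2 : wprotocol n Q1 -> pctrl Q1 =1 pctrl Q2 -> pchi Q1 =1 pchi Q2 ->
    (forall u b, (size u < n)%N -> visit Q1 u != 0 -> pe Q1 u b = pe Q2 u b) ->
  value p n Q1 = value p n Q2.
Proof.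
elim: n Q1 Q2 => [|n IH] Q1 Q2 hQ hc hx he; first by rewrite /= hx.
have E b : pe Q1 [::] b = pe Q2 [::] b by apply: he; rewrite ?visit_nil ?oner_eq0.
have V b : pe Q1 [::] b != 0 -> value p n (rsub Q1 [:: b]) = value p n (rsub Q2 [:: b]).
  move=> hb; apply: IH => [|u|u|u c hu hv]; rewrite /= ?hc ?hx //.
    exact: wprotocol_child.
  by apply: he => //; rewrite visit_cons mulf_neq0.
rewrite !valueS hc; case: ifP => _.
  apply: eq_bigr => b _; have [e0|e0] := eqVneq (pe Q1 [::] b) 0.
    by rewrite -E e0 !mul0r.
  by rewrite E V.
have -> : min_child (fun c => value p n (rsub Q2 [:: c])) Q2 =
          min_child (fun c => value p n (rsub Q1 [:: c])) Q1.
  rewrite /min_child -!E; case: eqP => // /eqP e0; case: eqP => // /eqP e1.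
  by rewrite !V.
by rewrite V // lt0r_neq0 // (min_child_pe _ hQ).
Qed.

End Value.

Section Attacks.
Variable R : realType.
Implicit Types (Q : proto R).

Lemma attack_val_01 q n Q f : wprotocol n Q -> attack_ok q n Q f ->
  0 <= attack_val q n Q f <= 1.
Proof.
elim: n Q f => [|n IH] Q f hQ /=; first by case: (_ == _); rewrite lexx ler01.
case: ifP => _ => [[hp hok]|hok]; first exact/(IH _ _ _ hok)/wprotocol_child/lt0r_neq0.
apply: (pe_root_mean_bounds hQ) => b hb; apply: IH (hok b _); first exact: wprotocol_child.
by rewrite lt_def hb (pe_root_ge0 hQ).
Qed.

Definition glue (g : bool -> seq bool -> bool) (c : bool) : seq bool -> bool :=
  fun w => if w is b :: w' then g b w' else c.

Lemma exists_attack_val p n Q : wprotocol n Q -> pm Q = n ->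
  exists f, attack_ok (~~ p) n Q f /\ attack_val (~~ p) n Q f = 1 - value p n Q.
Proof.
elim: n Q => [|n IH] Q hQ hpm.
  by exists (fun=> false); split => //=; case: p; case: (pchi Q [::]); rewrite /=; ring.
set V := fun c => value p n (rsub Q [:: c]).
have IHc c : exists g, pe Q [::] c != 0 ->
    attack_ok (~~ p) n (rsub Q [:: c]) g /\ attack_val (~~ p) n (rsub Q [:: c]) g = 1 - V c.
  have [hc|hc] := eqVneq (pe Q [::] c) 0; first by exists (fun=> false).
  by have [g hg] := IH _ (wprotocol_child hQ hc) (pm_rsub1 c hpm); exists g.
have [g0 hg0] := IHc false; have [g1 hg1] := IHc true.
pose g b := if b then g1 else g0.
have hg b : pe Q [::] b != 0 ->
    attack_ok (~~ p) n (rsub Q [:: b]) (g b) /\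
    attack_val (~~ p) n (rsub Q [:: b]) (g b) = 1 - V b.
  by case: b.
have hctrl : (pctrl Q [::] == ~~ p) = ~~ (pctrl Q [::] == p) by case: pctrl; case: (p).
rewrite /= hctrl -/V; case: (pctrl Q [::] == p) => /=; last first.
  have hc := min_child_pe V hQ; exists (glue (fun=> g (min_child V Q)) (min_child V Q)).
  by have [] := hg _ (lt0r_neq0 hc).
exists (glue g false); split; first by move=> b /lt0r_neq0/hg[].
transitivity (\sum_(b : bool) pe Q [::] b * (1 - V b)).
  apply: eq_bigr => b _; have [->|hb] := eqVneq (pe Q [::] b) 0; first by rewrite !mul0r.
  by rewrite (hg b hb).2.
by rewrite -{2}(sum_pe_root hQ) -sumrB; apply: eq_bigr => b _; rewrite /V mulrBr mulr1.
Qed.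

Lemma Best_ge_Exp_dom p n Q : wprotocol n Q -> pm Q = n ->
  1 - Exp Q (dom p Q) <= Best (~~ p) (Some Q).
Proof.
move=> hQ hpm; have [f [hok hv]] := exists_attack_val p hQ hpm.
rewrite (Exp_dom _ hQ hpm) -hv /= hpm; apply: ub_le_sup; last by exists f.
by exists 1 => _ [g [hg ->]]; case/andP: (attack_val_01 hQ hg).
Qed.

End Attacks.

Section Conditioning.
Variable R : realType.
Implicit Types (Q : proto R) (M : seq bool -> R).

Lemma ExpUE n Q M u : pm Q = n ->
  ExpU Q M u = if visit Q u == 0 then 0
               else Exp_rec (n - size u) (rsub Q u) (fun w => M (u ++ w)).
Proof. by move=> hpm; rewrite /ExpU /sub; case: eqP => //= _; rewrite ExpE /= hpm. Qed.

Definition supp n Q := #|[pred t : n.-tuple bool | visit Q t != 0]|.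

Section Cond.
Variables (n : nat) (Q : proto R) (M : seq bool -> R).
Hypotheses (hQ : wprotocol n Q) (hpm : pm Q = n) (hM : forall w, 0 <= M w <= 1).

Lemma ExpU_01 u : 0 <= ExpU Q M u <= 1.
Proof.
rewrite (ExpUE _ _ hpm); case: eqP => [_|/eqP hv]; first by rewrite lexx ler01.
by apply: Exp_rec_bounds => [|w]; [exact: wprotocol_rsub | exact: hM].
Qed.

Lemma ExpU_nil : ExpU Q M [::] = Exp Q M.
Proof.
rewrite (ExpUE _ _ hpm) visit_nil oner_eq0 subn0 ExpE hpm.
exact: Exp_rec_ext.
Qed.

Lemma ExpU_leaf u : size u = n -> ExpU Q M u = if visit Q u == 0 then 0 else M u.
Proof. by move=> hs; rewrite (ExpUE _ _ hpm) hs subnn /= cats0. Qed.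

Lemma ExpU_split u : (size u < n)%N -> visit Q u != 0 ->
  ExpU Q M u = \sum_(b : bool) pe Q u b * ExpU Q M (rcons u b).
Proof.
move=> hs hv; rewrite (ExpUE _ _ hpm) (negPf hv) -subnSK //=.
apply: eq_bigr => b _; rewrite cats0; have [->|nz] := eqVneq (pe Q u b) 0.
  by rewrite !mul0r.
rewrite (ExpUE _ _ hpm) visit_rcons mulf_eq0 (negPf hv) (negPf nz) size_rcons.
by congr (_ * _); apply: Exp_rec_ext => [w c|w]; rewrite /= cat_rcons.
Qed.

Lemma ExpU_eq1_edge u b : (size u < n)%N -> visit Q u != 0 -> ExpU Q M u = 1 ->
  pe Q u b * (1 - ExpU Q M (rcons u b)) = 0.
Proof.
move=> hs hv h1; have [e0 e1 es] := hQ hs hv.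
have t c : 0 <= pe Q u c * (1 - ExpU Q M (rcons u c)).
  have /andP[_ ?] := ExpU_01 (rcons u c).
  by rewrite mulr_ge0 ?subr_ge0 //; case: (c).
have : \sum_(c : bool) pe Q u c * (1 - ExpU Q M (rcons u c)) = 0.
  transitivity (\sum_(c : bool) pe Q u c - \sum_(c : bool) pe Q u c * ExpU Q M (rcons u c)).
    by rewrite -sumrB; apply: eq_bigr => c _; rewrite mulrBr mulr1.
  by rewrite -(ExpU_split hs hv) h1 big_bool /= addrC es subrr.
by move/(psumr_eq0P (fun c _ => t c)); apply.
Qed.

Lemma visit_ExpU_le u : (size u <= n)%N -> visit Q u * ExpU Q M u <= Exp Q M.
Proof.
elim/last_ind: u => [|u b IH]; first by rewrite visit_nil mul1r ExpU_nil.
rewrite size_rcons visit_rcons => hs; apply: le_trans (IH (ltnW hs)).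
have [->|hv] := eqVneq (visit Q u) 0; first by rewrite !mul0r.
rewrite -mulrA ler_wpM2l ?(visit_ge0 hQ (ltnW hs)) // (ExpU_split hs hv) (sum_boolE _ b).
have [e0 e1 _] := hQ hs hv; have /andP[E0 _] := ExpU_01 (rcons u (~~ b)).
by rewrite lerDl mulr_ge0 //; case: (b).
Qed.

Lemma ExpU_eq0 u : Exp Q M = 0 -> (size u <= n)%N -> visit Q u != 0 -> ExpU Q M u = 0.
Proof.
move=> h0 hs hv; have := visit_ExpU_le hs; rewrite h0.
have hp : 0 < visit Q u by rewrite lt_def hv (visit_ge0 hQ hs).
by rewrite pmulr_rle0 // => h; apply/le_anti; rewrite h; case/andP: (ExpU_01 u).
Qed.

Lemma pe_cond_proto_Exp0 u b : Exp Q M = 0 -> (size u < n)%N -> visit Q u != 0 ->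
  pe (cond_proto Q M) u b = pe Q u b.
Proof.
move=> h0 hs hv; rewrite /= (ExpU_eq0 h0 (ltnW hs) hv) eq_sym oner_eq0 subr0 divr1.
have [->|hb] := eqVneq (pe Q u b) 0; first by rewrite mul0r.
by rewrite (ExpU_eq0 h0) ?subr0 ?mulr1 ?size_rcons // visit_rcons mulf_neq0.
Qed.

Hypothesis hE : Exp Q M < 1.

(* Bayes' rule for the conditional protocol. *)
Lemma visit_cond u : (size u <= n)%N ->
  visit (cond_proto Q M) u * (1 - Exp Q M) = visit Q u * (1 - ExpU Q M u).
Proof.
elim/last_ind: u => [|u b IH]; first by rewrite !visit_nil ExpU_nil.
rewrite size_rcons !visit_rcons /= => hs; have {}IH := IH (ltnW hs).
have hE0 : 1 - Exp Q M != 0 by rewrite subr_eq0 eq_sym lt_eqF.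
have cond0 : visit Q u * (1 - ExpU Q M u) = 0 -> visit (cond_proto Q M) u = 0.
  by rewrite -IH => /eqP; rewrite mulf_eq0 (negPf hE0) orbF => /eqP.
have [hv|hv] := eqVneq (visit Q u) 0; first by rewrite cond0 hv ?mul0r.
case: ifP => [/eqP h1|/negbT h1].
  by rewrite cond0 ?h1 ?subrr ?mulr0 // !mul0r -mulrA ExpU_eq1_edge // mulr0.
have h1' : 1 - ExpU Q M u != 0 by rewrite subr_eq0 eq_sym.
rewrite mulrAC IH -!mulrA; congr (_ * _).
by rewrite mulrCA; congr (_ * _); rewrite mulrC divfK.
Qed.

Lemma visit_cond_leaf l : size l = n ->
  visit (cond_proto Q M) l * (1 - Exp Q M) = visit Q l * (1 - M l).
Proof.
move=> hs; rewrite visit_cond ?hs // ExpU_leaf //.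
by case: eqP => [->|]; rewrite ?mul0r.
Qed.

Lemma wprotocol_cond : wprotocol n (cond_proto Q M).
Proof.
move=> u hs hv'; have hE0 : 0 < 1 - Exp Q M by rewrite subr_gt0.
have : visit Q u * (1 - ExpU Q M u) != 0.
  by rewrite -visit_cond 1?ltnW // mulf_neq0 // gt_eqF.
rewrite mulf_eq0 negb_or subr_eq0 => /andP[hv]; rewrite eq_sym => h1.
have [e0 e1 es] := hQ hs hv.
have /andP[_ le1] := ExpU_01 u; have hp : 0 < 1 - ExpU Q M u by rewrite subr_gt0 lt_neqAle h1.
have g b : 0 <= 1 - ExpU Q M (rcons u b) by case/andP: (ExpU_01 (rcons u b)); rewrite subr_ge0.
rewrite /= (negPf h1) !divr_ge0 ?mulr_ge0 ?(ltW hp) //; split => //.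
have hsum : pe Q u false * (1 - ExpU Q M (rcons u false)) +
            pe Q u true * (1 - ExpU Q M (rcons u true)) = 1 - ExpU Q M u.
  by rewrite (ExpU_split hs hv) big_bool /= -[in RHS]es; ring.
by rewrite -mulrDl hsum divff ?gt_eqF.
Qed.

Lemma visit_cond_eq0 l : size l = n ->
  (visit (cond_proto Q M) l == 0) = (visit Q l * (1 - M l) == 0).
Proof.
move=> hl; rewrite -(visit_cond_leaf hl) mulf_eq0.
by rewrite subr_eq0 (eq_sym 1) (lt_eqF hE) orbF.
Qed.

Lemma supp_cond_subset :
  [pred t : n.-tuple bool | visit (cond_proto Q M) t != 0] \subset
  [pred t : n.-tuple bool | visit Q t != 0].
Proof.
apply/fintype.subsetP => t; rewrite !inE visit_cond_eq0 ?size_tuple //.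
by apply: contraNN => /eqP ->; rewrite mul0r.
Qed.

Lemma supp_cond_le : (supp n (cond_proto Q M) <= supp n Q)%N.
Proof. exact: subset_leq_card supp_cond_subset. Qed.

Lemma supp_cond_lt l : size l = n -> visit Q l != 0 -> M l = 1 ->
  (supp n (cond_proto Q M) < supp n Q)%N.
Proof.
move=> hl hv h1; apply/proper_card; rewrite properE supp_cond_subset /=.
apply/fintype.subsetPn; exists (Tuple (introT eqP hl)); rewrite !inE //=.
by rewrite visit_cond_eq0 // h1 subrr mulr0 eqxx.
Qed.

End Cond.

Definition cond_dom p Q := cond_proto Q (dom p Q).

(* If E[M^A] = 0, conditioning on M^A leaves the reachable part of the protocol
   unchanged, so the expectation of M^B cannot vanish as well. *)
Lemma supp_round_lt n Q : wprotocol n Q -> pm Q = n ->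
    Exp Q (dom true Q) < 1 -> Exp (cond_dom true Q) (dom false (cond_dom true Q)) < 1 ->
  (supp n (cond_dom false (cond_dom true Q)) < supp n Q)%N.
Proof.
set Q' := cond_dom true Q => hQ hpm ha hb.
have dA l := dom_01 true l hQ hpm.
have hQ' : wprotocol n Q' := wprotocol_cond hQ hpm dA ha.
have dB l := dom_01 false l hQ' hpm.
have [apos|a0] := ltP 0 (Exp Q (dom true Q)).
  rewrite (Exp_dom _ hQ hpm) in apos; have [l hl [hv hd]] := value_pos_leaf hQ hpm apos.
  apply: leq_ltn_trans (supp_cond_le hQ' hpm dB hb) (supp_cond_lt hQ hpm dA ha hl hv _).
  by rewrite /dom hpm.
have E0 : Exp Q (dom true Q) = 0.
  by apply/le_anti; rewrite a0 (Exp_dom _ hQ hpm); case/andP: (value_01 true hQ).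
have := @value_eq0_valueN _ true _ _ hQ; rewrite -(Exp_dom _ hQ hpm) => /(_ E0).
rewrite (value_ext false hQ (Q2 := Q')) // => [bpos|u b hu hv]; last first.
  by rewrite (pe_cond_proto_Exp0 hQ hpm dA b E0 hu hv).
have [l hl [hv hd]] := value_pos_leaf hQ' hpm bpos.
apply: leq_trans (supp_cond_le hQ hpm dA ha).
by apply: (supp_cond_lt hQ' hpm dB hb hl hv); rewrite /dom hpm.
Qed.

End Conditioning.

Section Sequence.
Variable R : realType.
Implicit Types (Q : proto R).

Definition wprotocolO n (o : option (proto R)) :=
  if o is Some Q then wprotocol n Q /\ pm Q = n else True.

Lemma wprotocolO_cond p n o : wprotocolO n o -> wprotocolO n (cond o (domO p o)).
Proof.
case: o => [Q|] //= [hQ hpm]; case: ifP => // hE; split => //.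
exact: wprotocol_cond hQ hpm (fun l => dom_01 p l hQ hpm) hE.
Qed.

Lemma domO_01 p n o l : wprotocolO n o -> 0 <= domO p o l <= 1.
Proof. by case: o => [Q [hQ hpm]|_]; [exact: dom_01 hQ hpm | rewrite /= lexx ler01]. Qed.

Lemma ExpO_domO_01 p n o : wprotocolO n o -> 0 <= ExpO o (domO p o) <= 1.
Proof.
case: o => [Q [hQ hpm]|_] /=; last by rewrite lexx ler01.
by rewrite (Exp_dom _ hQ hpm) value_01.
Qed.

Lemma Best_ge_ExpO_domO p n o : wprotocolO n o -> 1 - ExpO o (domO p o) <= Best (~~ p) o.
Proof.
by case: o => [Q [hQ hpm]|_]; [exact: Best_ge_Exp_dom hQ hpm | rewrite /= subr0 lexx].
Qed.

Variable P : proto R.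
Hypothesis hP : is_protocol P.
Local Notation n := (pm P).

Lemma wprotocolO_PiA j : wprotocolO n (PiA P j).
Proof.
elim: j => [|j IH] /=; first by split => //; exact: is_protocol_wprotocol.
exact/wprotocolO_cond/wprotocolO_cond.
Qed.

Lemma wprotocolO_PiB j : wprotocolO n (PiB P j).
Proof. exact/wprotocolO_cond/wprotocolO_PiA. Qed.

Definition MA j := domO true (PiA P j).
Definition MB j := domO false (PiB P j).
Definition muA j := ExpO (PiA P j) (MA j).
Definition muB j := ExpO (PiB P j) (MB j).

Lemma muA_01 j : 0 <= muA j <= 1. Proof. exact: ExpO_domO_01 (wprotocolO_PiA j). Qed.
Lemma muB_01 j : 0 <= muB j <= 1. Proof. exact: ExpO_domO_01 (wprotocolO_PiB j). Qed.
Lemma MA_01 j l : 0 <= MA j l <= 1. Proof. exact: domO_01 (wprotocolO_PiA j). Qed.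
Lemma MB_01 j l : 0 <= MB j l <= 1. Proof. exact: domO_01 (wprotocolO_PiB j). Qed.
Lemma muA_ge0 j : 0 <= muA j. Proof. by case/andP: (muA_01 j). Qed.
Lemma muB_ge0 j : 0 <= muB j. Proof. by case/andP: (muB_01 j). Qed.

Lemma alpha_le_muA j : alpha P j <= muA j.
Proof. by have := Best_ge_ExpO_domO true (wprotocolO_PiA j); rewrite /alpha /muA /MA; lra. Qed.

Lemma beta_le_muB j : beta P j <= muB j.
Proof. by have := Best_ge_ExpO_domO false (wprotocolO_PiB j); rewrite /beta /muB /MB; lra. Qed.

Lemma PiB_cond j Q : PiA P j = Some Q -> muA j < 1 -> PiB P j = Some (cond_dom true Q).
Proof. by rewrite /muA /MA /PiB => -> /= hE; rewrite /stepB /= hE. Qed.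

Lemma PiAS_cond j Q : PiB P j = Some Q -> muB j < 1 -> PiA P j.+1 = Some (cond_dom false Q).
Proof.
by rewrite /muB /MB /PiA iterS -/(PiA P j) -/(PiB P j) => -> /= hE; rewrite /stepA /= hE.
Qed.

Lemma visit_PiB j Q l : PiA P j = Some Q -> muA j < 1 -> size l = n ->
  visit (cond_dom true Q) l * (1 - muA j) = visit Q l * (1 - MA j l).
Proof.
move=> hA ha hl; have := wprotocolO_PiA j; rewrite /muA /MA hA /= in ha * => -[hQ hpm].
exact: (visit_cond_leaf hQ hpm (fun w => dom_01 true w hQ hpm) ha hl).
Qed.

Lemma visit_PiAS j Q l : PiB P j = Some Q -> muB j < 1 -> size l = n ->
  visit (cond_dom false Q) l * (1 - muB j) = visit Q l * (1 - MB j l).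
Proof.
move=> hB hb hl; have := wprotocolO_PiB j; rewrite /muB /MB hB /= in hb * => -[hQ hpm].
exact: (visit_cond_leaf hQ hpm (fun w => dom_01 false w hQ hpm) hb hl).
Qed.

Lemma PiA_supp j : (forall t, (t < j)%N -> muA t < 1 /\ muB t < 1) ->
  exists2 Q, PiA P j = Some Q & (supp n Q + j <= supp n P)%N.
Proof.
elim: j => [|j IH] H; first by exists P; rewrite ?addn0.
have [Q hA hs] := IH (fun t ht => H t (ltnW ht)); have [ha hb] := H j (ltnSn j).
have hB := PiB_cond hA ha.
exists (cond_dom false (cond_dom true Q)); first exact: PiAS_cond hB hb.
have := wprotocolO_PiA j; rewrite hA => -[hQ hpm].
move: ha hb; rewrite /muA /MA /muB /MB hA hB => ha hb.
by have := supp_round_lt hQ hpm ha hb; lia.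
Qed.

Lemma exists_mu_ge1 : exists K, 1 <= muA K \/ 1 <= muB K.
Proof.
have [//|H] := pselect (exists K, 1 <= muA K \/ 1 <= muB K).
have lt1 t : (t < (supp n P).+1)%N -> muA t < 1 /\ muB t < 1.
  by move=> _; rewrite !ltNge; split; apply/negP => h; apply: H; exists t; [left|right].
by have [Q _] := PiA_supp lt1; lia.
Qed.

Definition survival j l := \prod_(i < j) ((1 - MA i l) * (1 - MB i l)).
Definition survival_mass j := \prod_(i < j) ((1 - muA i) * (1 - muB i)).

Lemma PiA_survival j : (forall t, (t < j)%N -> muA t < 1 /\ muB t < 1) ->
  exists2 Q, PiA P j = Some Q &
    forall l : n.-tuple bool, visit P l * survival j l = survival_mass j * visit Q l.
Proof.
elim: j => [|j IH] H.
  by exists P => // l; rewrite /survival /survival_mass !big_ord0 mulr1 mul1r.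
have [Q hA hW] := IH (fun t ht => H t (ltnW ht)); have [ha hb] := H j (ltnSn j).
have hB := PiB_cond hA ha.
exists (cond_dom false (cond_dom true Q)) => [|l]; first exact: PiAS_cond hB hb.
have eA := visit_PiB hA ha (size_tuple l); have eB := visit_PiAS hB hb (size_tuple l).
rewrite /survival /survival_mass !big_ord_recr /= -/(survival j l) -/(survival_mass j).
transitivity (survival_mass j * (visit Q l * (1 - MA j l)) * (1 - MB j l)).
  by rewrite !mulrA hW; ring.
rewrite -eA; transitivity
  (survival_mass j * (1 - muA j) * (visit (cond_dom true Q) l * (1 - MB j l))); first by ring.
by rewrite -eB; ring.
Qed.

Lemma Exp_survival_MA j : (forall t, (t < j)%N -> muA t < 1 /\ muB t < 1) ->
  Exp P (fun l => survival j l * MA j l) = survival_mass j * muA j.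
Proof.
move=> H; have [Q hA hW] := PiA_survival H; have := wprotocolO_PiA j; rewrite hA => -[_ hpm].
rewrite /muA /MA hA /= (Exp_pm _ hpm) big_distrr; apply: eq_bigr => l _.
by rewrite mulrA hW -mulrA.
Qed.

Lemma Exp_survival_MB j : (forall t, (t < j)%N -> muA t < 1 /\ muB t < 1) -> muA j < 1 ->
  Exp P (fun l => survival j l * (1 - MA j l) * MB j l) =
  survival_mass j * (1 - muA j) * muB j.
Proof.
move=> H ha; have [Q hA hW] := PiA_survival H; have hB := PiB_cond hA ha.
have := wprotocolO_PiB j; rewrite hB => -[_ hpm].
have eA l := visit_PiB hA ha (size_tuple l).
rewrite /muB /MB hB /= (Exp_pm _ hpm) big_distrr; apply: eq_bigr => l _.
transitivity (survival_mass j * (visit Q l * (1 - MA j l)) * dom false (cond_dom true Q) l).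
  by rewrite !mulrA hW; ring.
by rewrite -eA /=; ring.
Qed.

Lemma survival_mass_01 j : 0 <= survival_mass j <= 1.
Proof.
have f01 i : 0 <= (1 - muA i) * (1 - muB i) <= 1.
  have [f0 f1 _] := mul1B_bounds (muA_01 i) (muB_01 i).
  by rewrite f0 (le_trans f1) // lerBlDr lerDl; case/andP: (muA_01 i).
by rewrite prodr_ge0 ?prodr_ile1 // => i _; case/andP: (f01 i).
Qed.

Lemma survival_mass_ge j : 1 - \sum_(i < j) (muA i + muB i) <= survival_mass j.
Proof.
elim: j => [|j IH]; first by rewrite big_ord0 subr0 /survival_mass big_ord0.
rewrite big_ord_recr /survival_mass big_ord_recr /= -/(survival_mass j).
have /andP[a0 a1] := muA_01 j; have /andP[b0 b1] := muB_01 j.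
apply: (union_bound_mul (survival_mass_01 j) _ IH).
  by rewrite mulr_ile1 ?subr_ge0 ?lerBlDr ?lerDl.
by apply: union_bound_mul; rewrite ?lexx ?subr_ge0 ?lerBlDr ?lerDl ?a0 ?a1.
Qed.

Lemma survival_ge0 j l : 0 <= survival j l.
Proof. by apply: prodr_ge0 => i _; case: (mul1B_bounds (MA_01 i l) (MB_01 i l)). Qed.

Lemma Exp_CA_ge z : (forall t, (t < z)%N -> muA t < 1 /\ muB t < 1) ->
  (1 - (\sum_(i < z) muA i + \sum_(i < z) muB i)) * \sum_(j < z.+1) muA j <= Exp P (CA P z).
Proof.
move=> H; have Hj (j : 'I_z.+1) t : (t < j)%N -> muA t < 1 /\ muB t < 1.
  by move=> ht; apply: H; apply: leq_trans ht _; rewrite -ltnS.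
apply: (@le_trans _ _ (\sum_(j < z.+1) Exp P (fun l => survival j l * MA j l))).
  rewrite mulr_sumr; apply: ler_sum => j _; rewrite (Exp_survival_MA (Hj j)).
  apply: ler_wpM2r; first exact: muA_ge0.
  apply: le_trans (survival_mass_ge j).
  have hj : (j <= z)%N by rewrite -ltnS.
  by rewrite lerB // big_split lerD // ler_sum_ord_widen // => i;
    [exact: muA_ge0 | exact: muB_ge0].
rewrite -(Exp_sum _ _ (fun j l => survival j l * MA j l)).
apply: (ler_Exp (is_protocol_wprotocol hP) (erefl _)) => l; apply: ler_sum => j _.
rewrite mulrC; apply: ler_wpM2l; first by case/andP: (MA_01 j l).
by apply: ler_prod => i _; have [? ? _] := mul1B_bounds (MA_01 i l) (MB_01 i l); apply/andP.
Qed.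

Lemma Exp_CB_ge z : (forall t, (t < z)%N -> muA t < 1 /\ muB t < 1) -> muA z < 1 ->
  (1 - (\sum_(i < z.+1) muA i + \sum_(i < z) muB i)) * \sum_(j < z.+1) muB j <= Exp P (CB P z).
Proof.
move=> H hz; have Hj (j : 'I_z.+1) t : (t < j)%N -> muA t < 1 /\ muB t < 1.
  by move=> ht; apply: H; apply: leq_trans ht _; rewrite -ltnS.
have ha (j : 'I_z.+1) : muA j < 1.
  by have := ltn_ord j; rewrite ltnS leq_eqVlt => /orP[/eqP ->|/H[]].
apply: (@le_trans _ _
  (\sum_(j < z.+1) Exp P (fun l => survival j l * (1 - MA j l) * MB j l))).
  rewrite mulr_sumr; apply: ler_sum => j _; rewrite (Exp_survival_MB (Hj j) (ha j)).
  apply: ler_wpM2r; first exact: muB_ge0.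
  have a1 : 1 - muA j <= 1 by rewrite lerBlDr lerDl muA_ge0.
  apply: le_trans (union_bound_mul (survival_mass_01 j) a1 (survival_mass_ge j) (lexx _)).
  have hj : (j <= z)%N by rewrite -ltnS.
  have := ler_sum_ord_widen muA_ge0 (hj : (j.+1 <= z.+1)%N).
  have := ler_sum_ord_widen muB_ge0 hj.
  by rewrite [\sum_(i < j.+1) _]big_ord_recr big_split /=; lra.
rewrite -(Exp_sum _ _ (fun j l => survival j l * (1 - MA j l) * MB j l)).
apply: (ler_Exp (is_protocol_wprotocol hP) (erefl _)) => l; apply: ler_sum => j _.
rewrite mulrC; apply: ler_wpM2l; first by case/andP: (MB_01 j l).
apply: (@le_trans _ _ (survival j l)).
  by rewrite ler_piMr ?survival_ge0 // lerBlDr lerDl; case/andP: (MA_01 j l).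
by apply: ler_prod => i _; have [? _ ?] := mul1B_bounds (MA_01 i l) (MB_01 i l); apply/andP.
Qed.

End Sequence.

Theorem lemma3p26 (R : realType) (P : proto R) (hP : is_protocol P)
    (c : R) (hc : 0 < c <= 2^-1) :
  exists z : nat,
    (c * (1 - 2 * c) <= Exp P (CA P z) /\ \sum_(j < z) beta P j < c) \/
    (c * (1 - 2 * c) <= Exp P (CB P z) /\ \sum_(j < z.+1) alpha P j < c).
Proof.
have /andP[c0 c1] := hc; have c2 : 2 * c <= 1 by rewrite -ler_pdivlMl ?ltr0n // mulr1.
have cK : exists K, c <= muA P K \/ c <= muB P K.
  have [K hK] := exists_mu_ge1 hP; exists K.
  by case: hK => h; [left|right]; apply: le_trans h; lra.
have [z [SA SB hz]] := exists_first_crossing (muA_ge0 hP) (muB_ge0 hP) c0 cK.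
have small t : (t < z)%N -> muA P t < 1 /\ muB P t < 1.
  move=> ht; have := ler_sum_term (muA_ge0 hP) ht; have := ler_sum_term (muB_ge0 hP) ht.
  by split; lra.
exists z; case: hz => [hA|/andP[hA hB]]; [left|right]; split.
- by apply: le_trans (Exp_CA_ge hP small); rewrite mulrC; apply: ler_pM; lra.
- by apply: le_lt_trans SB; apply: ler_sum => j _; exact: beta_le_muB.
- have hz : muA P z < 1 by have := ler_sum_term (muA_ge0 hP) (ltnSn z); lra.
  by apply: le_trans (Exp_CB_ge hP small hz); rewrite mulrC; apply: ler_pM; lra.
- by apply: le_lt_trans hA; apply: ler_sum => j _; exact: alpha_le_muA.
Qed.
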